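(* Let $a(z),b(z)\in\mathbb{C}[z,z^{-1}]$, $k\in\mathbb{Z}$, and $\sigma,\tau\in\{-1,1\}$, and let \[ I=\frac{1}{2}\left\|\left(a+\sigma z^k\overline{\widetilde{a}}\right)\left(b+\tau z^k\overline{\widetilde{b}}\right)\right\|_2^2+\frac{1}{2}\left\|\left(\widetilde{a}-\sigma z^k\overline{a}\right)\left(\widetilde{b}-\tau z^k\overline{b}\right)\right\|_2^2. \] Then \[ I=2\|ab\|_2^2+2\|a\widetilde{b}\|_2^2+2\sigma\tau\operatorname{Re}\int a\widetilde{a}\,\overline{b\widetilde{b}}+2\sigma\tau\operatorname{Re}\int z^{-2k}a\widetilde{a}b\widetilde{b}. \]
   Context: For a Laurent polynomial $a(z)=\sum_ja_jz^j\in\mathbb{C}[z,z^{-1}]$: $\widetilde{a}(z)=a(-z)$; $\overline{a}=\overline{a(z)}=\sum_j\overline{a_j}z^{-j}$ (its conjugate on the complex unit circle); $\int a$ denotes the constant coefficient $a_0=\frac{1}{2\pi}\int_0^{2\pi}a(e^{i\theta})d\theta$; and $\|a\|_2^2=\frac{1}{2\pi}\int_0^{2\pi}|a(e^{i\theta})|^2d\theta=\sum_j|a_j|^2$. *)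

From HB Require Import structures.
From mathcomp Require Import all_boot all_order all_algebra.
From mathcomp Require Import complex.
From mathcomp Require Import boolp classical_sets cardinality fsbigop reals.
Set Implicit Arguments. Unset Strict Implicit. Unset Printing Implicit Defensive.
Import Order.TTheory GRing.Theory Num.Theory.
Local Open Scope ring_scope.
Local Open Scope complex_scope.

Section Laurent.
Variable R : realType.
Local Notation C := R[i].

(* a Laurent polynomial sum_j a_j z^j, given by its coefficients *)
Definition laurent := int -> C.

Definition is_laurent (a : laurent) : Prop := finite_set [set j | a j != 0].

Definition Ladd (a b : laurent) : laurent := fun j => a j + b j.
Definition Lscale (c : C) (a : laurent) : laurent := fun j => c * a j.
Definition Lmul (a b : laurent) : laurent :=
  fun j => (\sum_(i \in [set: int]) a i * b (j - i))%R.
(* tilde a (z) = a(-z) *)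
Definition Ltilde (a : laurent) : laurent := fun j => (-1) ^ j * a j.
(* conjugate on the unit circle: sum_j conj(a_j) z^(-j) *)
Definition Lconj (a : laurent) : laurent := fun j => (a (- j))^*.
(* multiplication by z^k *)
Definition Lshift (k : int) (a : laurent) : laurent := fun j => a (j - k).
(* integral = constant coefficient *)
Definition Lint (a : laurent) : C := a 0.
Definition Lnorm2 (a : laurent) : C :=
  (\sum_(j \in [set: int]) `|a j| ^+ 2)%R.
End Laurent.

From HB Require Import structures.
From mathcomp Require Import all_boot all_order all_algebra.
From mathcomp Require Import complex.
From mathcomp Require Import boolp classical_sets cardinality fsbigop reals.
From mathcomp Require Import ring.

(* Put p := a + s z^k conj(a~) and q := a~ - s z^k conj(a), where a~(z) = a(-z).
   Conjugation and tilde are commuting involutive ring morphisms of the ring of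
   Laurent polynomials, so |s| = 1 gives
     p conj(p) = h + h~ + (w + conj w),   q conj(q) = h + h~ - (w + conj w)
   with h := a conj(a) and w := conj(s) z^-k a a~.  Since |p_a p_b|^2 is the
   integral of p_a conj(p_a) p_b conj(p_b), averaging the two norms kills the
   cross terms and leaves the integrals of (h_a + h_a~)(h_b + h_b~) and of
   (w_a + conj w_a)(w_b + conj w_b).  The integral is invariant under tilde and
   commutes with conjugation, so these are 2|ab|^2 + 2|ab~|^2 and
   2 Re int (w_a w_b) + 2 Re int (w_a conj w_b). *)

Set Implicit Arguments. Unset Strict Implicit. Unset Printing Implicit Defensive.
Import Order.TTheory GRing.Theory Num.Theory.
Local Open Scope ring_scope.
Local Open Scope complex_scope.
Local Open Scope classical_set_scope.

Section Laurent.
Variable R : realType.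
Local Notation C := R[i].
Local Notation laurent := (laurent R).
Implicit Types (a b c : laurent) (k : int).

Definition Ldelta k (x : C) : laurent := fun j => if j == k then x else 0.
Definition Lopp a : laurent := fun j => - a j.

Lemma fsumT_supp (I : choiceType) (V : nmodType) (F : I -> V) (S : set I) :
  (forall i, ~ S i -> F i = 0) -> \sum_(i \in [set: I]) F i = \sum_(i \in S) F i.
Proof. by move=> F0; apply/esym/fsbig_widen => // i [_ /F0]. Qed.

Lemma LmulE a b j : Lmul a b j = \sum_(i \in [set i | a i != 0]) a i * b (j - i).
Proof.
rewrite /Lmul (fsumT_supp (S := [set i | a i != 0])) //.
by move=> i /negP/negPn/eqP ->; rewrite mul0r.
Qed.

Lemma is_laurent_comp a (h : int -> int) : injective h -> is_laurent a -> is_laurent (a \o h).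
Proof. by move=> h_inj; apply: finite_preimage => i j _ _ /h_inj. Qed.

Lemma is_laurent_delta k x : is_laurent (Ldelta k x).
Proof.
apply: (sub_finite_set _ (finite_set1 k)) => j /=.
by rewrite /Ldelta; have [->|_] := eqVneq j k; rewrite ?eqxx.
Qed.

Lemma is_laurent_add a b : is_laurent a -> is_laurent b -> is_laurent (Ladd a b).
Proof.
move=> ha hb; apply: (@sub_finite_set _ _ ([set j | a j != 0] `|` [set j | b j != 0])).
  by move=> j /=; rewrite /Ladd; have [->|] := eqVneq (a j) 0; [rewrite add0r; right | left].
by rewrite finite_setU.
Qed.

Lemma is_laurent_opp a : is_laurent a -> is_laurent (Lopp a).
Proof. by apply: sub_finite_set => j /=; rewrite /Lopp oppr_eq0. Qed.

Lemma is_laurent_mul a b : is_laurent a -> is_laurent b -> is_laurent (Lmul a b).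
Proof.
move=> ha hb; apply: (sub_finite_set _ (finite_image2 (fun x y => x + y) ha hb)).
move=> j /= /(@fsbigN1 _ _ _ unit int setT (fun _ i => a i * b (j - i)) tt) [i _].
rewrite mulf_eq0 negb_or => /andP[ai bji]; exists i => //; exists (j - i) => //.
by rewrite addrC subrK.
Qed.

Lemma is_laurent_conj a : is_laurent a -> is_laurent (Lconj a).
Proof.
move=> /(is_laurent_comp (@oppr_inj _)); apply: sub_finite_set => j /=.
by rewrite /Lconj conjc_eq0.
Qed.

Lemma is_laurent_tilde a : is_laurent a -> is_laurent (Ltilde a).
Proof.
by apply: sub_finite_set => j /=; rewrite /Ltilde mulf_eq0 negb_or => /andP[].
Qed.

Lemma LmulC a b : Lmul a b = Lmul b a.
Proof.
apply/funext => j; rewrite /Lmul (reindex_fsbigT (fun i => j - i)).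
  by apply: eq_fsbigr => i _; rewrite subKr mulrC.
by exists (fun i => j - i) => i; rewrite subKr.
Qed.

Lemma LmulDr a b c : is_laurent a -> Lmul a (Ladd b c) = Ladd (Lmul a b) (Lmul a c).
Proof.
move=> ha; apply/funext => j; rewrite /Ladd !LmulE -fsbig_split //.
by apply: eq_fsbigr => i _; rewrite mulrDr.
Qed.

Lemma LmulA a b c : is_laurent a -> is_laurent c -> Lmul (Lmul a b) c = Lmul a (Lmul b c).
Proof.
move=> ha hc; apply/funext => j.
pose Sc := [set i | c (j - i) != 0].
have fin_Sc : finite_set Sc.
  by apply: (is_laurent_comp (h := fun i => j - i)) hc => i i' /addrI/oppr_inj.
have c_supp F i : ~ Sc i -> F i * c (j - i) = 0.
  by move/negP/negPn/eqP ->; rewrite mulr0.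
rewrite {1}/Lmul (fsumT_supp (S := Sc)); last exact: c_supp.
under eq_fsbigr => i _ do rewrite LmulE mulr_fsuml.
rewrite exchange_fsbig // [RHS]LmulE; apply: eq_fsbigr => l _.
under eq_fsbigr => i _ do rewrite -mulrA.
rewrite -mulr_fsumr -(fsumT_supp (S := Sc)); last exact: c_supp.
congr (_ * _); rewrite /Lmul (reindex_fsbigT (fun m => m + l)).
  by apply: eq_fsbigr => m _; rewrite addrK opprD addrA addrAC.
by exists (fun m => m - l) => m; rewrite ?addrK ?subrK.
Qed.

Lemma Lmul_delta k x a : Lmul (Ldelta k x) a = Lscale x (Lshift k a).
Proof.
apply/funext => j; rewrite /Lmul (fsumT_supp (S := [set k])).
  by rewrite fsbig_set1 /Ldelta eqxx.
by move=> i /eqP ik; rewrite /Ldelta ifN ?mul0r.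
Qed.

Lemma Lconj_mul a b : is_laurent a -> Lconj (Lmul a b) = Lmul (Lconj a) (Lconj b).
Proof.
move=> ha; apply/funext => j; rewrite /Lconj LmulE fsbig_finite // rmorph_sum /=.
rewrite -fsbig_finite // -(fsumT_supp (S := [set i | a i != 0])); last first.
  by move=> i /negP/negPn/eqP ->; rewrite mul0r conjc0.
rewrite /Lmul [RHS](reindex_fsbigT (fun i => - i)); last by exists -%R => i; rewrite opprK.
by apply: eq_fsbigr => i _; rewrite rmorphM !opprK opprD.
Qed.

Lemma Ltilde_mul a b : Ltilde (Lmul a b) = Lmul (Ltilde a) (Ltilde b).
Proof.
apply/funext => j; rewrite /Ltilde /Lmul mulr_fsumr; apply: eq_fsbigr => i _.
by rewrite -{1}(subrKC i j) expfzDr ?oppr_eq0 ?oner_eq0 // mulrACA.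
Qed.

Lemma Ltilde_conj a : Ltilde (Lconj a) = Lconj (Ltilde a).
Proof.
apply/funext => j; rewrite /Ltilde /Lconj rmorphM /= !expN1r abszN.
by rewrite rmorphXn rmorphN1.
Qed.

Lemma LtildeK a : Ltilde (Ltilde a) = a.
Proof.
apply/funext => j.
by rewrite /Ltilde mulrA -exprzMl ?unitrN1 // mulrNN mulr1 exp1rz mul1r.
Qed.

Record lpoly := LPoly { lval : laurent; lvalP : is_laurent lval }.

Lemma lval_inj : injective lval.
Proof. by case=> a ha [b hb] /= eab; subst b; congr LPoly; apply: Prop_irrelevance. Qed.

HB.instance Definition _ := gen_eqMixin lpoly.
HB.instance Definition _ := gen_choiceMixin lpoly.

Implicit Types x y z : lpoly.

Definition ladd x y := LPoly (is_laurent_add (lvalP x) (lvalP y)).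
Definition lopp x := LPoly (is_laurent_opp (lvalP x)).
Definition lmono k (c : C) := LPoly (is_laurent_delta k c).

(* Locked, so that unification never unfolds the convolution sums. *)
Fact lmul_key : unit. Proof. by []. Qed.
Definition lmul : lpoly -> lpoly -> lpoly :=
  locked_with lmul_key (fun x y => LPoly (is_laurent_mul (lvalP x) (lvalP y))).

Lemma lval_lmul x y : lval (lmul x y) = Lmul (lval x) (lval y).
Proof. by rewrite /lmul locked_withE. Qed.

Lemma laddA : associative ladd.
Proof. by move=> x y z; apply/lval_inj/funext => j; rewrite /= /Ladd addrA. Qed.

Lemma laddC : commutative ladd.
Proof. by move=> x y; apply/lval_inj/funext => j; rewrite /= /Ladd addrC. Qed.

Lemma ladd0 : left_id (lmono 0 0) ladd.
Proof.
by move=> x; apply/lval_inj/funext => j; rewrite /= /Ladd /Ldelta if_same add0r.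
Qed.

Lemma laddN : left_inverse (lmono 0 0) lopp ladd.
Proof.
by move=> x; apply/lval_inj/funext => j; rewrite /= /Ladd /Lopp /Ldelta if_same addNr.
Qed.

HB.instance Definition _ := GRing.isZmodule.Build lpoly laddA laddC ladd0 laddN.

Lemma lmulA : associative lmul.
Proof. by move=> x y z; apply: lval_inj; rewrite !lval_lmul LmulA //; apply: lvalP. Qed.

Lemma lmulC : commutative lmul.
Proof. by move=> x y; apply: lval_inj; rewrite !lval_lmul LmulC. Qed.

Lemma lmul1 : left_id (lmono 0 1) lmul.
Proof.
move=> x; apply/lval_inj; rewrite lval_lmul Lmul_delta; apply/funext => j.
by rewrite /Lscale /Lshift subr0 mul1r.
Qed.

Lemma lmulDl : left_distributive lmul ladd.
Proof.
move=> x y z; apply/lval_inj; rewrite /= !lval_lmul !(LmulC _ (lval z)) LmulDr //.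
exact: lvalP.
Qed.

Lemma lmono01_neq0 : lmono 0 1 != lmono 0 0.
Proof.
apply/eqP => /(congr1 (fun x => lval x 0)); rewrite /= /Ldelta eqxx.
by move/eqP; rewrite oner_eq0.
Qed.

HB.instance Definition _ :=
  GRing.Zmodule_isComNzRing.Build lpoly lmulA lmulC lmul1 lmulDl lmono01_neq0.

Lemma lval_add x y : lval (x + y) = Ladd (lval x) (lval y).
Proof. by []. Qed.

Lemma lval_lmonoM k (c : C) x : lval (lmono k c * x) = Lscale c (Lshift k (lval x)).
Proof. by rewrite lval_lmul Lmul_delta. Qed.

Lemma lval_lmono1M k x : lval (lmono k 1 * x) = Lshift k (lval x).
Proof. by rewrite lval_lmonoM; apply/funext => j; rewrite /Lscale mul1r. Qed.

Lemma lmonoM k l (c d : C) : lmono k c * lmono l d = lmono (k + l) (c * d).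
Proof.
apply/lval_inj; rewrite lval_lmonoM; apply/funext => j.
by rewrite /Lscale /Lshift /= /Ldelta subr_eq addrC; case: eqP; rewrite ?mulr0.
Qed.

Lemma lmonoN k (c : C) : lmono k (- c) = - lmono k c.
Proof.
by apply/lval_inj/funext => j; rewrite /= /Lopp /Ldelta; case: eqP; rewrite ?oppr0.
Qed.

Definition lconj x := LPoly (is_laurent_conj (lvalP x)).
Definition ltilde x := LPoly (is_laurent_tilde (lvalP x)).
Definition lint x := Lint (lval x).
Arguments lint : simpl never.
Definition lnorm2 x := lint (x * lconj x).

Lemma lval_conj x : lval (lconj x) = Lconj (lval x).
Proof. by []. Qed.

Lemma lval_tilde x : lval (ltilde x) = Ltilde (lval x).
Proof. by []. Qed.

Lemma lconj_lmono k (c : C) : lconj (lmono k c) = lmono (- k) c^*.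
Proof.
apply/lval_inj/funext => j; rewrite /= /Lconj /Ldelta eqr_oppLR.
by case: eqP; rewrite ?conjc0.
Qed.

Lemma lconj_is_zmod_morphism : zmod_morphism lconj.
Proof.
by move=> x y; apply/lval_inj/funext => j; rewrite /= /Lconj /Ladd /Lopp rmorphB.
Qed.

Lemma lconj_is_monoid_morphism : monoid_morphism lconj.
Proof.
split; first by rewrite lconj_lmono oppr0 conjc1.
by move=> x y; apply: lval_inj; rewrite /= !lval_lmul Lconj_mul //; apply: lvalP.
Qed.

HB.instance Definition _ := GRing.isZmodMorphism.Build lpoly lpoly lconj
  lconj_is_zmod_morphism.
HB.instance Definition _ := GRing.isMonoidMorphism.Build lpoly lpoly lconj
  lconj_is_monoid_morphism.

Lemma lconjK : involutive lconj.
Proof. by move=> x; apply/lval_inj/funext => j; rewrite /= /Lconj opprK conjcK. Qed.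

Lemma ltilde_is_zmod_morphism : zmod_morphism ltilde.
Proof.
by move=> x y; apply/lval_inj/funext => j; rewrite /= /Ltilde /Ladd /Lopp mulrBr.
Qed.

Lemma ltilde_is_monoid_morphism : monoid_morphism ltilde.
Proof.
split=> [|x y]; last by apply: lval_inj; rewrite /= !lval_lmul Ltilde_mul.
apply/lval_inj/funext => j; rewrite /= /Ltilde /Ldelta.
by case: eqP => [->|]; rewrite ?mulr0 ?expr0z ?mulr1.
Qed.

HB.instance Definition _ := GRing.isZmodMorphism.Build lpoly lpoly ltilde
  ltilde_is_zmod_morphism.
HB.instance Definition _ := GRing.isMonoidMorphism.Build lpoly lpoly ltilde
  ltilde_is_monoid_morphism.

Lemma ltildeK : involutive ltilde.
Proof. by move=> x; apply/lval_inj/LtildeK. Qed.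

Lemma ltilde_conj x : ltilde (lconj x) = lconj (ltilde x).
Proof. exact/lval_inj/Ltilde_conj. Qed.

Lemma lint_is_zmod_morphism : zmod_morphism lint.
Proof. by []. Qed.

HB.instance Definition _ := GRing.isZmodMorphism.Build lpoly C lint
  lint_is_zmod_morphism.

Lemma lint_lmono0M (c : C) x : lint (lmono 0 c * x) = c * lint x.
Proof. by rewrite /lint lval_lmonoM /Lscale /Lshift /Lint subr0. Qed.

Lemma lint_tilde x : lint (ltilde x) = lint x.
Proof. by rewrite /lint /Lint /= /Ltilde expr0z mul1r. Qed.

Lemma lint_conj x : lint (lconj x) = (lint x)^*.
Proof. by rewrite /lint /Lint /= /Lconj oppr0. Qed.

Lemma Lnorm2E x : Lnorm2 (lval x) = lnorm2 x.
Proof.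
rewrite /lnorm2 /lint /Lint lval_lmul /Lmul /Lnorm2; apply: eq_fsbigr => i _.
by rewrite /= /Lconj sub0r opprK normCK.
Qed.

Lemma lnorm2M x y : lnorm2 (x * y) = lint (x * lconj x * (y * lconj y)).
Proof. by rewrite /lnorm2 rmorphM mulrACA. Qed.

Lemma twisted_mul_conj m x y : m * lconj m = 1 ->
  let p := x + m * lconj y in
  p * lconj p = x * lconj x + y * lconj y
                + (lconj m * (x * y) + lconj (lconj m * (x * y))).
Proof.
move=> hm /=; rewrite !(rmorphD, rmorphM) /= !lconjK -[y * lconj y]mul1r -hm.
by ring.
Qed.

Lemma lint_mul_add_tilde x y :
  lint ((x + ltilde x) * (y + ltilde y)) = 2 * lint (x * y) + 2 * lint (x * ltilde y).
Proof.
have tilde_xy : lint (ltilde x * ltilde y) = lint (x * y) by rewrite -rmorphM lint_tilde.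
have tilde_x_y : lint (ltilde x * y) = lint (x * ltilde y).
  by rewrite -[LHS]lint_tilde rmorphM /= ltildeK.
rewrite mulrDl !mulrDr !raddfD /= tilde_xy tilde_x_y.
by ring.
Qed.

Lemma lint_mul_add_conj x y :
  lint ((x + lconj x) * (y + lconj y)) =
  2 * 'Re (lint (x * y)) + 2 * 'Re (lint (x * lconj y)).
Proof.
have conj_xy : lint (lconj x * lconj y) = (lint (x * y))^* by rewrite -rmorphM lint_conj.
have conj_x_y : lint (lconj x * y) = (lint (x * lconj y))^*.
  by rewrite -lint_conj rmorphM /= lconjK.
rewrite mulrDl !mulrDr !raddfD /= conj_xy conj_x_y !ReE.
by field.
Qed.

Lemma lint_avg_mul_pm u1 u2 v1 v2 :
  2^-1 * lint ((u1 + v1) * (u2 + v2)) + 2^-1 * lint ((u1 - v1) * (u2 - v2))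
  = lint (u1 * u2) + lint (v1 * v2).
Proof.
rewrite -mulrDr -raddfD.
have -> : (u1 + v1) * (u2 + v2) + (u1 - v1) * (u2 - v2) = (u1 * u2 + v1 * v2) *+ 2.
  by ring.
by rewrite raddfMn raddfD /= mulr2n; field.
Qed.

Section TwistedSum.
Variable k : int.

Let w (c : C) x := lconj (lmono k c) * (x * ltilde x).

Lemma unimodular_lmono (c : C) : c * c^* = 1 -> lmono k c * lconj (lmono k c) = 1.
Proof. by move=> hc; rewrite lconj_lmono lmonoM subrr hc. Qed.

Lemma twist_plus_mul_conj (c : C) x : c * c^* = 1 ->
  let p := x + lmono k c * lconj (ltilde x) in
  p * lconj p = x * lconj x + ltilde (x * lconj x) + (w c x + lconj (w c x)).
Proof.
move=> /unimodular_lmono hc /=; rewrite twisted_mul_conj //.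
by rewrite (rmorphM ltilde) /= ltilde_conj.
Qed.

Lemma twist_minus_mul_conj (c : C) x : c * c^* = 1 ->
  let q := ltilde x + lmono k (- c) * lconj x in
  q * lconj q = x * lconj x + ltilde (x * lconj x) - (w c x + lconj (w c x)).
Proof.
move=> hc /=; rewrite twisted_mul_conj; last first.
  by apply: unimodular_lmono; rewrite rmorphN mulrNN.
rewrite (rmorphM ltilde) /= ltilde_conj lmonoN (rmorphN lconj) /= mulNr (rmorphN lconj) /=.
by rewrite /w [ltilde x * x]mulrC; ring.
Qed.

Lemma lnorm2_twisted_sum x y (c d : C) : c * c^* = 1 -> d * d^* = 1 ->
  2^-1 * lnorm2 ((x + lmono k c * lconj (ltilde x)) * (y + lmono k d * lconj (ltilde y)))
  + 2^-1 * lnorm2 ((ltilde x + lmono k (- c) * lconj x) * (ltilde y + lmono k (- d) * lconj y))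
  = 2 * lnorm2 (x * y) + 2 * lnorm2 (x * ltilde y)
    + 2 * 'Re (c^* * d * lint (x * ltilde x * lconj (y * ltilde y)))
    + 2 * 'Re (c^* * d^* * lint (lmono (- (2 * k)) 1 * (x * ltilde x * (y * ltilde y)))).
Proof.
move=> hc hd; rewrite 2!lnorm2M (twist_plus_mul_conj x hc) (twist_plus_mul_conj y hd).
rewrite (twist_minus_mul_conj x hc) (twist_minus_mul_conj y hd).
rewrite lint_avg_mul_pm (lint_mul_add_tilde (x * lconj x)) (lint_mul_add_conj (w c x)).
have -> : lint (x * lconj x * (y * lconj y)) = lnorm2 (x * y) by rewrite lnorm2M.
have -> : lint (x * lconj x * ltilde (y * lconj y)) = lnorm2 (x * ltilde y).
  by rewrite lnorm2M (rmorphM ltilde) /= ltilde_conj.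
have -> : w c x * w d y =
    lmono 0 (c^* * d^*) * (lmono (- (2 * k)) 1 * (x * ltilde x * (y * ltilde y))).
  rewrite /w !lconj_lmono mulrACA lmonoM [RHS]mulrA lmonoM add0r mulr1.
  by congr (lmono _ _ * _); ring.
have -> : w c x * lconj (w d y) = lmono 0 (c^* * d) * (x * ltilde x * lconj (y * ltilde y)).
  by rewrite /w (rmorphM lconj) /= lconjK lconj_lmono mulrACA lmonoM addNr.
by rewrite !lint_lmono0M; ring.
Qed.

End TwistedSum.

End Laurent.

Lemma sign_real (F : numClosedFieldType) (s : F) : s = 1 \/ s = -1 -> s \is Num.real.
Proof. by case=> ->; rewrite ?rpredN real1. Qed.

Lemma sign_mul_conj (F : numClosedFieldType) (s : F) : s = 1 \/ s = -1 -> s * s^* = 1.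
Proof. by case=> ->; rewrite ?rmorphN rmorph1 ?mulrNN mulr1. Qed.

Theorem lemma2p10 (R : realType) (a b : laurent R) (k : int) (sigma tau : R[i])
  (ha : is_laurent a) (hb : is_laurent b)
  (hsigma : sigma = 1 \/ sigma = -1) (htau : tau = 1 \/ tau = -1) :
  let I :=
    2^-1 * Lnorm2 (Lmul (Ladd a (Lscale sigma (Lshift k (Lconj (Ltilde a)))))
                        (Ladd b (Lscale tau (Lshift k (Lconj (Ltilde b))))))
  + 2^-1 * Lnorm2 (Lmul (Ladd (Ltilde a) (Lscale (- sigma) (Lshift k (Lconj a))))
                        (Ladd (Ltilde b) (Lscale (- tau) (Lshift k (Lconj b))))) in
  I = 2 * Lnorm2 (Lmul a b) + 2 * Lnorm2 (Lmul a (Ltilde b))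
      + 2 * sigma * tau
          * 'Re (Lint (Lmul (Lmul a (Ltilde a)) (Lconj (Lmul b (Ltilde b)))))
      + 2 * sigma * tau
          * 'Re (Lint (Lshift (- (2 * k)) (Lmul (Lmul a (Ltilde a)) (Lmul b (Ltilde b))))).
Proof.
have := lnorm2_twisted_sum k (LPoly ha) (LPoly hb) (sign_mul_conj hsigma) (sign_mul_conj htau).
rewrite -!Lnorm2E /lint.
rewrite !(lval_lmono1M, lval_lmonoM, lval_lmul, lval_add, lval_conj, lval_tilde) /=.
have [sigma_real tau_real] := conj (sign_real hsigma) (sign_real htau).
by rewrite !conj_Creal // !ReMl ?rpredM // !mulrA.
Qed.
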